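(* Let $n\geqslant1$ and let $G_1,\dots,G_n$ be groups. For each $1\leqslant i\leqslant n$ let $A_i\subseteq G_i$ be a subset with a minimal complement $M_i$ in $G_i$. Then $\prod_{i=1}^nM_i$ is a minimal complement of $\prod_{i=1}^nA_i$ in $\prod_{i=1}^nG_i$.
   Context: A nonempty $W'\subseteq G$ is a complement to $W\subseteq G$ if $WW'=\{ww':w\in W,w'\in W'\}=G$; it is a minimal complement if no proper subset of $W'$ is a complement to $W$. Products of groups carry the componentwise operation. *)

From HB Require Import structures.
From mathcomp Require Import all_boot.
From mathcomp Require Import monoid.

Set Implicit Arguments.
Unset Strict Implicit.
Unset Printing Implicit Defensive.

Local Open Scope group_scope.

(* Subsets of a (possibly infinite) type, as Prop-valued predicates. *)
Definition subset_of (T : Type) := T -> Prop.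

Definition is_complement (G : magmaType) (W W' : subset_of G) : Prop :=
  (exists w', W' w') /\
  (forall g : G, exists w w', W w /\ W' w' /\ w * w' = g).

Definition is_minimal_complement (G : magmaType) (W W' : subset_of G) : Prop :=
  is_complement W W' /\
  (forall W'' : subset_of G,
      (forall x, W'' x -> W' x) -> (exists x, W' x /\ ~ W'' x) ->
      ~ is_complement W W'').

Definition prodG (n : nat) (G : 'I_n -> groupType) : Type := forall i, G i.

Definition prodG_mul (n : nat) (G : 'I_n -> groupType)
  (x y : prodG G) : prodG G := fun i => x i * y i.

HB.instance Definition _ (n : nat) (G : 'I_n -> groupType) :=
  hasMul.Build (prodG G) (@prodG_mul n G).

Definition prod_subset (n : nat) (G : 'I_n -> groupType)
  (A : forall i, subset_of (G i)) : subset_of (prodG G) :=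
  fun x => forall i, A i (x i).

From HB Require Import structures.
From mathcomp Require Import all_boot.
From mathcomp Require Import monoid.
From Stdlib Require Import Classical IndefiniteDescription.
From Stdlib Require Import FunctionalExtensionality.

(* A complement W' of W is minimal exactly when each of its elements m is
   forced: some g factors through W W' only with right factor m (otherwise
   W' minus m would still be a complement).  Forcing is checked
   componentwise in a direct product, so products of minimal complements are
   minimal complements. *)

Local Open Scope group_scope.

Definition forced_factor {G : magmaType} (W W' : subset_of G) (g m : G) :
    Prop :=
  forall w m', W w -> W' m' -> w * m' = g -> m' = m.

Section ForcedFactor.

Context {G : magmaType} {W W' : subset_of G}.

Lemma minimal_complement_forced {m : G} :
  is_minimal_complement W W' -> W' m -> exists g, forced_factor W W' g m.
Proof.
move=> [_ minW'] W'm; apply: NNPP => not_forced.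
have other_factor g : exists w m', W w /\ (W' m' /\ m' <> m) /\ w * m' = g.
  apply: NNPP => no_other; apply: not_forced; exists g => w m' Ww W'm' wm'E.
  apply: NNPP => m'_neq; apply: no_other; exists w, m'; by do !split.
apply: (minW' (fun m' => W' m' /\ m' <> m)).
- by move=> x [].
- by exists m; split => // -[].
- split=> [|g].
  + by have [_ [m' [_ [W'm' _]]]] := other_factor m; exists m'.
  + by have [w [m' [Ww [W'm' E]]]] := other_factor g; exists w, m'.
Qed.

Lemma forced_minimal_complement :
  is_complement W W' -> (forall m, W' m -> exists g, forced_factor W W' g m) ->
  is_minimal_complement W W'.
Proof.
move=> compW' forced; split=> // W'' subW'' [m [W'm notW''m]] [_ compW''].
have [g g_forces_m] := forced m W'm.
have [w [m'' [Ww [W''m'' E]]]] := compW'' g.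
have W'm'' := subW'' _ W''m''.
by apply: notW''m; rewrite -(g_forces_m w m'').
Qed.

End ForcedFactor.

Lemma dependent_functional_choice
    {I : Type} {T : I -> Type} {P : forall i, T i -> Prop} :
  (forall i, exists x, P i x) -> exists f : forall i, T i, forall i, P i (f i).
Proof.
move=> exP; pose x i := constructive_indefinite_description _ (exP i).
by exists (fun i => proj1_sig (x i)) => i; exact: proj2_sig (x i).
Qed.

Section ProductSubsets.

Variables (n : nat) (G : 'I_n -> groupType) (A M : forall i, subset_of (G i)).

Lemma prodG_eq (x y : prodG G) : (forall i, x i = y i) -> x = y.
Proof. exact: functional_extensionality_dep. Qed.

Lemma prod_subset_complement :
  (forall i : 'I_n, is_complement (A i) (M i)) ->
  is_complement (prod_subset A) (prod_subset M).
Proof.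
move=> compM; split.
  have [m Mm] := dependent_functional_choice (fun i : 'I_n => proj1 (compM i)).
  by exists m.
move=> g.
have decomp i : exists p : G i * G i, [/\ A i p.1, M i p.2 & p.1 * p.2 = g i].
  by have [a [m [Aa [Mm E]]]] := proj2 (compM i) (g i); exists (a, m).
have [am AMam] := dependent_functional_choice decomp.
exists (fun i => (am i).1), (fun i => (am i).2); split; [|split].
- by move=> i; case: (AMam i).
- by move=> i; case: (AMam i).
- by apply: prodG_eq => i; case: (AMam i).
Qed.

Lemma prod_subset_forced_factor (g m : prodG G) :
  (forall i : 'I_n, forced_factor (A i) (M i) (g i) (m i)) ->
  forced_factor (prod_subset A) (prod_subset M) g m.
Proof.
move=> forced w m' Aw Mm' E; apply: prodG_eq => i.
by apply: (forced i (w i)) => //; rewrite -E.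
Qed.

End ProductSubsets.

Theorem proposition5p1 (n : nat) (G : 'I_n -> groupType)
  (A M : forall i : 'I_n, subset_of (G i)) :
  (1 <= n)%N ->
  (forall i : 'I_n, is_minimal_complement (A i) (M i)) ->
  is_minimal_complement (prod_subset A) (prod_subset M).
Proof.
move=> _ minM; apply: forced_minimal_complement.
  by apply: prod_subset_complement => i; case: (minM i).
move=> m Mm.
have [g forces] := dependent_functional_choice
  (fun i : 'I_n => minimal_complement_forced (minM i) (Mm i)).
by exists g; apply: prod_subset_forced_factor.
Qed.
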